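(* Under the standing setup, let $\mathcal S_\dagger\subset\mathbb R^D$ be a finite nonempty anchor set and let $\hat V_\tau(s,l,t)$, for $s\in\mathcal S_\dagger$, $l\in\{0,\dots,k\}$, $t\in\{0,\dots,T-1\}$, be the values computed by the anchor recursion. Then $\hat V_\tau(s,l,t)\ge V_\tau(s,l,t)$ for all such $s,l,t$.
   Context: Standing setup: state space $\mathcal S=\mathbb R^D$, finite action set $\mathcal A$, horizon $T\ge2$, noise space $\mathcal U$. A transition mechanism $g_S:\mathcal S\times\mathcal A\times\mathcal U\to\mathcal S$ is bijective in its last argument, with inverse $g_S^{-1}:\mathcal S\times\mathcal A\times\mathcal S\to\mathcal U$ satisfying $u=g_S^{-1}(s,a,s')$ whenever $s'=g_S(s,a,u)$. Reward $R:\mathcal S\times\mathcal A\to\mathbb R$. Lipschitz assumption: for each $a\in\mathcal A,u\in\mathcal U$ there is $K_{a,u}\ge0$ with $\|g_S(s,a,u)-g_S(s',a,u)\|\le K_{a,u}\|s-s'\|$, and for each $a$ there is $C_a\ge0$ with $|R(s,a)-R(s',a)|\le C_a\|s-s'\|$, for all $s,s'\in\mathcal S$ (Euclidean norm). An observed episode $\tau$ consists of states $s_0,\dots,s_{T-1}$ and actions $a_0,\dots,a_{T-1}$; put $u_t=g_S^{-1}(s_t,a_t,s_{t+1})$ for $t=0,\dots,T-2$. Fix a budget $k\in\{0,\dots,T\}$. For $t\le T-2$ define $F^+_{\tau,t}((s,l),a)=\big(g_S(s,a,u_t),\,l+\mathbf 1[a\ne a_t]\big)$. For $t\in\{0,\dots,T-1\}$,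 $l\in\{0,\dots,k\}$, $s\in\mathcal S$, the value $V_\tau(s,l,t)$ is the maximum of $\sum_{t'=t}^{T-1}R(s'_{t'},a'_{t'})$ over action sequences $a'_t,\dots,a'_{T-1}\in\mathcal A$ with $\sum_{t'=t}^{T-1}\mathbf 1[a'_{t'}\ne a_{t'}]\le k-l$, where $s'_t=s$ and $s'_{t'+1}=g_S(s'_{t'},a'_{t'},u_{t'})$. Constants: $K_{u_t}=\max_{a}K_{a,u_t}$, $C=\max_a C_a$, $L_{T-1}=C$, $L_t=C+L_{t+1}K_{u_t}$ for $t\le T-2$. For $l\in\{0,\dots,k\}$ and time $t$, let $\mathcal A'_{l,t}=\{a_t\}$ if $l=k$ and $\mathcal A'_{l,t}=\mathcal A$ if $l<k$. Anchor recursion (defined only for $s\in\mathcal S_\dagger$): $\hat V_\tau(s,l,T-1)=\max_{a\in\mathcal A}R(s,a)$ for $l<k$ and $\hat V_\tau(s,k,T-1)=R(s,a_{T-1})$; for $t=T-2,\dots,0$ and $l=k,\dots,0$, $$\hat V_\tau(s,l,t)=\max_{a\in\mathcal A'_{l,t}}\Big\{R(s,a)+\min_{s_\dagger\in\mathcal S_\dagger}\big\{\hat V_\tau(s_\dagger,l_a,t+1)+L_{t+1}\|s_\dagger-s_a\|\big\}\Big\},$$ where $(s_a,l_a)=F^+_{\tau,t}((s,l),a)$. *)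

From mathcomp Require Import all_boot all_order all_algebra.
From mathcomp Require Import reals.
Set Implicit Arguments. Unset Strict Implicit. Unset Printing Implicit Defensive.
Import Order.TTheory GRing.Theory Num.Theory.
Local Open Scope ring_scope.

Section CFDefs.
Variables (R : realType) (D : nat) (A : finType) (U : Type).
Local Notation S := 'rV[R]_D.

Definition enorm (x : S) : R := Num.sqrt (\sum_(i < D) x 0 i ^+ 2).

Variables (g : S -> A -> U -> S) (ginv : S -> A -> S -> U) (Rw : S -> A -> R).
(* Lipschitz constants K_{a,u} and C_a *)
Variables (K : A -> U -> R) (Cc : A -> R).
(* horizon T, observed episode (states st, actions ac), budget k, anchor set Sd *)
Variables (T : nat) (st : nat -> S) (ac : nat -> A) (k : nat) (Sd : seq S).

Definition noise (t : nat) : U := ginv (st t) (ac t) (st t.+1).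

(* action a'_{t'} of a candidate sequence x (only indices < T are used) *)
Definition act (x : T.-tuple A) (t' : nat) : A := nth (ac 0) x t'.

Fixpoint cf_state (s : S) (t : nat) (x : T.-tuple A) (n : nat) : S :=
  if n is n'.+1 then g (cf_state s t x n') (act x (t + n')) (noise (t + n'))
  else s.

Definition ret (s : S) (t : nat) (x : T.-tuple A) : R :=
  \sum_(t <= t' < T) Rw (cf_state s t x (t' - t)) (act x t').

Definition changes (t : nat) (x : T.-tuple A) : nat :=
  \sum_(t <= t' < T) (act x t' != ac t').

Definition obs_actions : T.-tuple A := [tuple ac i | i < T].

(* V_tau(s,l,t): maximum over feasible action sequences a'_t..a'_{T-1};
   the observed sequence is feasible, so using its return as the neutral
   element of the max gives exactly the maximum. *)
Definition Vtau (s : S) (l t : nat) : R :=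
  \big[Num.max/ret s t obs_actions]_(x : T.-tuple A | (changes t x <= k - l)%N)
     ret s t x.

Definition Ku (t : nat) : R := \big[Num.max/K (ac 0) (noise t)]_(b : A) K b (noise t).
Definition Cmax : R := \big[Num.max/Cc (ac 0)]_(b : A) Cc b.

(* Lm m = L_{T-1-m} *)
Fixpoint Lm (m : nat) : R :=
  if m is m'.+1 then Cmax + Lm m' * Ku (T.-1 - m) else Cmax.
Definition Lc (t : nat) : R := Lm (T.-1 - t).

Definition maxA' (l t : nat) (f : A -> R) : R :=
  if (l < k)%N then \big[Num.max/f (ac t)]_(b : A) f b else f (ac t).

Definition minSd (f : S -> R) : R :=
  match Sd with
  | [::] => 0
  | x :: r => foldr (fun y m => Num.min (f y) m) (f x) r
  end.

(* Vhm m s l = hat V_tau(s, l, T-1-m) (anchor recursion) *)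
Fixpoint Vhm (m : nat) (s : S) (l : nat) : R :=
  if m is m'.+1 then
    let t := (T.-1 - m)%N in
    maxA' l t (fun b =>
      Rw s b + minSd (fun sd =>
        Vhm m' sd (l + (b != ac t))%N + Lc t.+1 * enorm (sd - g s b (noise t))))
  else maxA' l T.-1 (fun b => Rw s b).

Definition Vhat (s : S) (l t : nat) : R := Vhm (T.-1 - t) s l.

End CFDefs.

From Pilot Require Import Defs.
From mathcomp Require Import all_boot all_order all_algebra.
From mathcomp Require Import reals ring lra zify.
Import Order.TTheory GRing.Theory Num.Theory.
Local Open Scope ring_scope.

(* We prove the stronger, anchor-shifted bound
     ret(s, t, x) <= Vhat(sd, l, t) + L_t * |s - sd|
   for every state s, every anchor sd, and every action sequence x that
   respects the remaining budget k - l, by backward induction on t.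
   One step unfolds both sides: the return splits as the immediate reward
   plus the return from the next counterfactual state (Bellman splitting),
   the reward moves from s to sd at cost C |s - sd|, the next state moves
   from g(s,a,u_t) to g(sd,a,u_t) at cost K_{u_t} |s - sd|, and the
   induction hypothesis at every anchor, combined with the triangle
   inequality, bounds the inner minimum over anchors.  The recursion
   L_t = C + L_{t+1} K_{u_t} is exactly what absorbs these two costs.
   Taking sd = s and maximising over feasible x gives the theorem. *)

(* Cauchy-Schwarz for finite sums, via Lagrange's identity
   sum_{i,j} (a_i b_j - a_j b_i)^2 = 2 (|a|^2 |b|^2 - <a,b>^2). *)
Lemma cauchy_schwarz_sum {R : realFieldType} {n : nat} (a b : 'I_n -> R) :
  (\sum_i a i * b i) ^+ 2 <= (\sum_i a i ^+ 2) * (\sum_i b i ^+ 2).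
Proof.
have double_sum (f h : 'I_n -> R) :
    \sum_i \sum_j f i * h j = (\sum_i f i) * (\sum_j h j).
  by rewrite big_distrl /=; apply: eq_bigr => i _; rewrite big_distrr.
have lagrange : \sum_i \sum_j (a i * b j - a j * b i) ^+ 2 =
    2 * ((\sum_i a i ^+ 2) * (\sum_i b i ^+ 2) - (\sum_i a i * b i) ^+ 2).
  transitivity (\sum_i \sum_j (a i ^+ 2 * b j ^+ 2)
      + \sum_i \sum_j (b i ^+ 2 * a j ^+ 2)
      - \sum_i \sum_j (2 * (a i * b i)) * (a j * b j)).
    rewrite -big_split /= -sumrB; apply: eq_bigr => i _.
    by rewrite -big_split /= -sumrB; apply: eq_bigr => j _; ring.
  by rewrite !double_sum -mulr_sumr expr2; ring.
have : 0 <= \sum_i \sum_j (a i * b j - a j * b i) ^+ 2.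
  by apply: sumr_ge0 => i _; apply: sumr_ge0 => j _; exact: sqr_ge0.
rewrite lagrange; lra.
Qed.

Lemma enormD {R : realType} {D : nat} (x y : 'rV[R]_D) :
  enorm (x + y) <= enorm x + enorm y.
Proof.
rewrite /enorm; set X := \sum_i x 0 i ^+ 2; set Y := \sum_i y 0 i ^+ 2.
have -> : \sum_(i < D) (x + y) 0 i ^+ 2 = X + Y + 2 * \sum_i x 0 i * y 0 i.
  rewrite /X /Y -big_split /= mulr_sumr -big_split /=.
  by apply: eq_bigr => i _; rewrite mxE; ring.
have X0 : 0 <= X by apply: sumr_ge0 => i _; exact: sqr_ge0.
have Y0 : 0 <= Y by apply: sumr_ge0 => i _; exact: sqr_ge0.
have inner : \sum_i x 0 i * y 0 i <= Num.sqrt X * Num.sqrt Y.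
  rewrite -sqrtrM //; apply: (le_trans (ler_norm _)).
  rewrite -sqrtr_sqr ler_sqrt ?mulr_ge0 //; exact: cauchy_schwarz_sum.
have sum0 : 0 <= Num.sqrt X + Num.sqrt Y by rewrite addr_ge0 ?sqrtr_ge0.
rewrite -(ger0_norm sum0) -sqrtr_sqr ler_sqrt ?sqr_ge0 // sqrrD !sqr_sqrtr //.
lra.
Qed.

Lemma enorm_sym {R : realType} {D : nat} (x y : 'rV[R]_D) : enorm (x - y) = enorm (y - x).
Proof. by rewrite /enorm; congr Num.sqrt; apply: eq_bigr => i _; rewrite !mxE; ring. Qed.

Lemma enorm_subrr {R : realType} {D : nat} (x : 'rV[R]_D) : enorm (x - x) = 0.
Proof. by rewrite /enorm big1 ?sqrtr0 // => i _; rewrite !mxE subrr expr0n. Qed.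

Section AnchorBound.
Variables (R : realType) (D : nat) (A : finType) (U : Type)
  (g : 'rV[R]_D -> A -> U -> 'rV[R]_D) (ginv : 'rV[R]_D -> A -> 'rV[R]_D -> U)
  (Rw : 'rV[R]_D -> A -> R) (K : A -> U -> R) (Cc : A -> R)
  (T : nat) (st : nat -> 'rV[R]_D) (ac : nat -> A) (k : nat) (Sd : seq 'rV[R]_D).

Local Notation S := 'rV[R]_D.
Local Notation noise := (noise ginv st ac).
Local Notation act := (@act A T ac).
Local Notation cf_state := (cf_state g ginv st ac).
Local Notation ret := (ret g ginv Rw st ac).
Local Notation changes := (@changes A T ac).
Local Notation Lc := (Lc ginv K Cc T st ac).
Local Notation Ku := (Ku ginv K st ac).
Local Notation Cmax := (Cmax Cc ac).
Local Notation maxA' := (maxA' ac k).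
Local Notation Vhat := (Vhat g ginv Rw K Cc T st ac k Sd).

Lemma minSd_ge (c : R) (f : S -> R) :
  Sd != [::] -> (forall y, y \in Sd -> c <= f y) -> c <= minSd Sd f.
Proof.
rewrite /minSd; case: Sd => [//|x r] _ lb.
have lbx : c <= f x by apply: lb; rewrite inE eqxx.
have {lb} : forall y, y \in r -> c <= f y.
  by move=> y yr; apply: lb; rewrite inE yr orbT.
elim: r => [//|y r IH] lbr /=; rewrite le_min lbr ?inE ?eqxx //=.
by apply: IH => z zr; apply: lbr; rewrite inE zr orbT.
Qed.

Lemma maxA'_ge l t (f : A -> R) b :
  (l < k)%N || (b == ac t) -> f b <= maxA' l t f.
Proof.
rewrite /maxA'; case: ifP => _ /=; first by move=> _; exact: le_bigmax.
by move/eqP->.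
Qed.

Lemma cf_state_shift s t x n :
  cf_state s t x n.+1 = cf_state (g s (act x t) (noise t)) t.+1 x n.
Proof. by elim: n => [|n IH] /=; rewrite ?addn0 // -IH /= addSnnS. Qed.

Lemma ret_split s t x : (t < T)%N ->
  ret s t x = Rw s (act x t) + ret (g s (act x t) (noise t)) t.+1 x.
Proof.
move=> tT; rewrite /Defs.ret big_ltn // subnn; congr (_ + _).
by apply: eq_big_nat => t' /andP[tt' _]; rewrite -cf_state_shift subnSK.
Qed.

Lemma budget_step l t x : (t < T)%N -> (l <= k)%N ->
  (changes t x <= k - l)%N ->
  [/\ (l < k)%N || (act x t == ac t),
      (l + (act x t != ac t) <= k)%N
    & (changes t.+1 x <= k - (l + (act x t != ac t)))%N].
Proof.
rewrite /Defs.changes => tT lk; rewrite big_ltn //.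
by case: eqP => _; rewrite ?orbT ?orbF => feas; split=> //; lia.
Qed.

Lemma changes_obs t : changes t (obs_actions T ac) = 0%N.
Proof.
rewrite /Defs.changes big_nat big1 // => i /andP[_ iT].
by rewrite /Defs.act /obs_actions -[i]/(nat_of_ord (Ordinal iT)) nth_mktuple eqxx.
Qed.

Lemma Vhat_last s l : Vhat s l T.-1 = maxA' l T.-1 (Rw s).
Proof. by rewrite /Defs.Vhat subnn. Qed.

Lemma Vhat_step s l t : (t < T.-1)%N ->
  Vhat s l t = maxA' l t (fun b => Rw s b + minSd Sd (fun sd =>
      Vhat sd (l + (b != ac t)) t.+1 + Lc t.+1 * enorm (sd - g s b (noise t)))).
Proof.
move=> tT; rewrite /Defs.Vhat.
have -> : (T.-1 - t = (T.-1 - t.+1).+1)%N by lia.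
by rewrite [LHS]/=; have -> : (T.-1 - (T.-1 - t.+1).+1 = t)%N by lia.
Qed.

Lemma Lc_step t : (t < T.-1)%N -> Lc t = Cmax + Lc t.+1 * Ku t.
Proof.
move=> tT; rewrite /Defs.Lc.
have -> : (T.-1 - t = (T.-1 - t.+1).+1)%N by lia.
by rewrite [LHS]/=; have -> : (T.-1 - (T.-1 - t.+1).+1 = t)%N by lia.
Qed.

Section Lipschitz.
Hypothesis K_ge0 : forall a u, 0 <= K a u.
Hypothesis C_ge0 : forall a, 0 <= Cc a.

Lemma Ku_ge0 t : 0 <= Ku t.
Proof. exact: le_trans (K_ge0 (ac 0) _) (le_bigmax _ _ _). Qed.

Lemma Cmax_ge0 : 0 <= Cmax.
Proof. exact: le_trans (C_ge0 (ac 0)) (le_bigmax _ _ _). Qed.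

Lemma Lc_ge0 t : 0 <= Lc t.
Proof.
rewrite /Defs.Lc; elim: (T.-1 - t)%N => [|m IH] /=; first exact: Cmax_ge0.
by rewrite addr_ge0 ?mulr_ge0 ?Cmax_ge0 ?Ku_ge0.
Qed.

Hypothesis g_lip : forall a u s s',
  enorm (g s a u - g s' a u) <= K a u * enorm (s - s').
Hypothesis R_lip : forall a s s', `|Rw s a - Rw s' a| <= Cc a * enorm (s - s').

Lemma Rw_shift s sd b : Rw s b <= Rw sd b + Cmax * enorm (s - sd).
Proof.
have := ler_norm (Rw s b - Rw sd b); have := R_lip b s sd.
have : Cc b * enorm (s - sd) <= Cmax * enorm (s - sd).
  by apply: ler_wpM2r; [exact: sqrtr_ge0 | exact: le_bigmax].
lra.
Qed.

Lemma g_shift s sd b t :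
  enorm (g s b (noise t) - g sd b (noise t)) <= Ku t * enorm (s - sd).
Proof.
apply: le_trans (g_lip _ _ _ _) _.
by apply: ler_wpM2r; [exact: sqrtr_ge0 | exact: le_bigmax].
Qed.

Hypothesis Sd_nonempty : Sd != [::].

Lemma anchor_min_ge (V : S -> R) (L r : R) (s' y : S) : 0 <= L ->
  (forall sd, sd \in Sd -> r <= V sd + L * enorm (s' - sd)) ->
  r - L * enorm (s' - y) <= minSd Sd (fun sd => V sd + L * enorm (sd - y)).
Proof.
move=> L0 bound; apply: minSd_ge => // sd sdS.
have tri : enorm (s' - sd) <= enorm (s' - y) + enorm (sd - y).
  have -> : s' - sd = (s' - y) + (y - sd) by rewrite addrA subrK.
  by rewrite [enorm (sd - y)]enorm_sym; exact: enormD.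
have := bound sd sdS; have := ler_wpM2l L0 tri; rewrite mulrDr; lra.
Qed.

Lemma ret_le_Vhat t l s sd x : (t < T)%N -> sd \in Sd -> (l <= k)%N ->
  (changes t x <= k - l)%N ->
  ret s t x <= Vhat sd l t + Lc t * enorm (s - sd).
Proof.
move=> tT; have [n] : exists n, (t + n = T.-1)%N by exists (T.-1 - t)%N; lia.
elim: n t l s sd x tT => [|n IH] t l s sd x tT tn sdS lk feas;
  have [adm lk' feas'] := budget_step l t x tT lk feas.
  have tlast : t = T.-1 by rewrite -tn addn0.
  rewrite ret_split // /Defs.ret big_geq; last by lia.
  rewrite addr0 tlast Vhat_last /Defs.Lc subnn /=.
  by apply: le_trans (Rw_shift _ sd _) _; rewrite lerD // maxA'_ge // -tlast.
have tT1 : (t < T.-1)%N by lia.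
rewrite ret_split // Vhat_step // (Lc_step t tT1).
set b := act x t; set u := noise t; set e := enorm (s - sd).
have next : ret (g s b u) t.+1 x - Lc t.+1 * enorm (g s b u - g sd b u) <=
    minSd Sd (fun sd' => Vhat sd' (l + (b != ac t)) t.+1
                         + Lc t.+1 * enorm (sd' - g sd b u)).
  apply: anchor_min_ge (Lc_ge0 _) _ => sd' sd'S.
  by apply: IH => //; lia.
have pick := maxA'_ge l t (fun b0 => Rw sd b0 + minSd Sd (fun sd' =>
  Vhat sd' (l + (b0 != ac t)) t.+1 + Lc t.+1 * enorm (sd' - g sd b0 u))) b adm.
have reward := Rw_shift s sd b.
have state := ler_wpM2l (Lc_ge0 t.+1) (g_shift s sd b t).
rewrite /= in pick; rewrite -/e -/u mulrA in state; rewrite -/e in reward.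
rewrite mulrDl; lra.
Qed.

End Lipschitz.
End AnchorBound.

Theorem proposition1 (R : realType) (D : nat) (A : finType) (U : Type)
  (g : 'rV[R]_D -> A -> U -> 'rV[R]_D) (ginv : 'rV[R]_D -> A -> 'rV[R]_D -> U)
  (Rw : 'rV[R]_D -> A -> R) (K : A -> U -> R) (Cc : A -> R)
  (T : nat) (st : nat -> 'rV[R]_D) (ac : nat -> A) (k : nat) (Sd : seq 'rV[R]_D) :
  (2 <= T)%N -> (k <= T)%N ->
  (forall s a u, ginv s a (g s a u) = u) ->
  (forall s a s', g s a (ginv s a s') = s') ->
  (forall a u, 0 <= K a u) ->
  (forall a u s s', enorm (g s a u - g s' a u) <= K a u * enorm (s - s')) ->
  (forall a, 0 <= Cc a) ->
  (forall a s s', `|Rw s a - Rw s' a| <= Cc a * enorm (s - s')) ->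
  Sd != [::] ->
  forall (s : 'rV[R]_D) (l t : nat), s \in Sd -> (l <= k)%N -> (t < T)%N ->
    Vtau g ginv Rw T st ac k s l t
    <= Vhat g ginv Rw K Cc T st ac k Sd s l t.
Proof.
move=> _ _ _ _ K_ge0 g_lip C_ge0 R_lip Sd_nonempty s l t sS lk tT.
(* Each feasible return is bounded, taking the anchor sd := s itself. *)
have feasible_le (x : T.-tuple A) : (changes ac t x <= k - l)%N ->
    ret g ginv Rw st ac s t x <= Vhat g ginv Rw K Cc T st ac k Sd s l t.
  move=> feas; rewrite -[X in _ <= X]addr0 -(mulr0 (Lc ginv K Cc T st ac t)).
  by rewrite -(enorm_subrr s); apply: ret_le_Vhat.
apply: bigmax_le => [|x /feasible_le //].
by apply: feasible_le; rewrite changes_obs.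
Qed.
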